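(* Let $c\in\mathbb{C}(t)$, $c\notin\{0,1,t\}$, with homogeneous lift $C$, and let $F_1=(P_1,Q_1)$, $d$ and $G_C$ be as in the context. Then $$G_C(1,0)=\frac1d\log|P_1(1,0)|,\qquad G_C(0,1)=\frac1d\log|P_1(0,1)|,\qquad G_C(1,1)=\frac1d\log|P_1(1,1)-Q_1(1,1)|.$$
   Context: $F_{t_1,t_2}(z,w)=\big((t_1w^2-t_2z^2)^2,\;4t_2zw(w-z)(t_1w-t_2z)\big)$. $C=(c_1,c_2)$ is a pair of coprime homogeneous polynomials in $(t_1,t_2)$ of equal degree with $c(t)=c_1(t,1)/c_2(t,1)$. $F_1=F_{t_1,t_2}(C)/\gcd(F_{t_1,t_2}(C))=(P_1,Q_1)$ (dividing by the gcd of the two coordinates), $d=\deg F_1$, $F_{n+1}=F_{t_1,t_2}(F_n)/t_2^2$ (substitution of the coordinates of $F_n$ for $(z,w)$), and $G_C(t_1,t_2)=\lim_{n\to\infty}\frac{1}{4^{n-1}d}\log\max\{|\cdot|,|\cdot|\}$ of $F_n(t_1,t_2)$, the locally uniform limit on $\mathbb{C}^2\setminus\{(0,0)\}$. *)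

From HB Require Import structures.
From mathcomp Require Import all_boot all_order all_algebra.
From mathcomp Require Import boolp classical_sets filter reals topology normedtype sequences exp.
From mathcomp Require Export complex.
Import Order.TTheory GRing.Theory Num.Theory numFieldNormedType.Exports.

Set Implicit Arguments.
Unset Strict Implicit.
Unset Printing Implicit Defensive.

Local Open Scope ring_scope.

Section Defs.
Variable R : realType.
Local Notation C := (R[i]).

(* Polynomials in the two variables (t1, t2) over C:
   outer variable = t2, inner variable = t1.  So p = \sum_j p`_j(t1) t2^j. *)
Definition bpoly := {poly {poly C}}.

Definition T1 : bpoly := ('X)%:P.
Definition T2 : bpoly := 'X.

Definition beval (p : bpoly) (a b : C) : C := (p.[b%:P]).[a].

(* p is homogeneous of total degree k (0 is homogeneous of every degree) *)
Definition homog (k : nat) (p : bpoly) : Prop :=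
  forall i j : nat, ((p`_j)`_i != 0) -> (i + j = k)%N.

Definition bdvd (h p : bpoly) : Prop := exists a : bpoly, p = h * a.
Definition bcoprime (p q : bpoly) : Prop :=
  forall h : bpoly, bdvd h p -> bdvd h q -> h \is a GRing.unit.

Definition Fmap (z w : bpoly) : bpoly * bpoly :=
  ((T1 * w ^+ 2 - T2 * z ^+ 2) ^+ 2,
   4%:R * T2 * z * w * (w - z) * (T1 * w - T2 * z)).

(* division by t2^2 (t2 is the outer variable, so this is drop_poly 2;
   it is exact division whenever t2^2 divides the polynomial) *)
Definition divT2sq (p : bpoly) : bpoly := drop_poly 2 p.

(* Fseq P1 Q1 n = F_{n+1}, with F_1 = (P1, Q1) and
   F_{n+1} = F_{t1,t2}(F_n) / t2^2 *)
Fixpoint Fseq (P1 Q1 : bpoly) (n : nat) : bpoly * bpoly :=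
  match n with
  | 0 => (P1, Q1)
  | n.+1 => let: (p, q) := Fseq P1 Q1 n in
            let: (p', q') := Fmap p q in (divT2sq p', divT2sq q')
  end.

Definition cabs (z : C) : R := Normc.normc z.

(* Gseq P1 Q1 d a b n = 1/(4^(n) d) log max(|P_{n+1}(a,b)|, |Q_{n+1}(a,b)|),
   i.e. the (n+1)-th term of the sequence defining G_C(a,b). *)
Definition Gseq (P1 Q1 : bpoly) (d : nat) (a b : C) (n : nat) : R :=
  ln (Num.max (cabs (beval (Fseq P1 Q1 n).1 a b))
              (cabs (beval (Fseq P1 Q1 n).2 a b)))
  / ((4 ^ n * d)%N)%:R.

End Defs.

(* Coprimality of C forces t2 to divide Q1, so F_n = (P_n, t2 R_n) where
   (P_n, R_n) is iterated by a division-free polynomial map.  At (1,0) and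
   (0,1) this gives P_{n+1} = P_n^4, and at (1,1) it gives
   P_{n+1} - Q_{n+1} = (P_n - Q_n)^4.  Hence max(|P_n|, |Q_n|) = a^(4^n) m_n,
   with a the claimed base value and m_n controlled by a ratio w_n obeying a
   quadratic recurrence, so that log m_n = O(2^n) vanishes after division by
   4^n. *)

From HB Require Import structures.
From mathcomp Require Import all_boot all_order all_algebra.
From mathcomp Require Import boolp classical_sets filter reals topology normedtype sequences exp.
From mathcomp Require Import complex.
From mathcomp Require Import ring lra.
Import Order.TTheory GRing.Theory Num.Theory numFieldNormedType.Exports.
Set Implicit Arguments. Unset Strict Implicit. Unset Printing Implicit Defensive.
Local Open Scope ring_scope. Local Open Scope classical_set_scope.

Lemma mulX_of_root0 (A : idomainType) (p : {poly A}) :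
  p.[0] = 0 -> exists q, p = 'X * q.
Proof.
move=> p0; have /factor_theorem [q ->] : root p 0 by apply/eqP.
by exists q; rewrite subr0 mulrC.
Qed.

Lemma mulXn_factor_nroot0 (A : idomainType) (g q h : {poly A}) (k : nat) :
  q.[0] != 0 -> g * q = 'X^k * h -> exists g', g = 'X^k * g'.
Proof.
move=> q0; elim: k g h => [|k IH] g h; first by exists g; rewrite expr0 mul1r.
move=> gq; have gq0 : g.[0] * q.[0] = 0.
  by rewrite -hornerM gq exprS -mulrA hornerM hornerX mul0r.
move/eqP: gq0; rewrite mulf_eq0 (negbTE q0) orbF => /eqP /mulX_of_root0 [g1 g_eq].
rewrite {}g_eq in gq *.
have /IH [g' ->] : g1 * q = 'X^k * h.
  by apply: (@mulfI _ 'X); rewrite ?polyX_eq0 // mulrA gq exprS mulrA.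
by exists g'; rewrite mulrA -exprS.
Qed.

Section ReducedIteration.
Variable R : realType.
Local Notation C := (R[i]).
Local Notation bp := (bpoly R).
Local Notation t1 := (T1 R).
Local Notation t2 := (T2 R).

Lemma bdvd_T2_reduced_Fmap (c1 c2 g P1 Q1 : bp) : bcoprime c1 c2 ->
  Fmap c1 c2 = (g * P1, g * Q1) -> bdvd t2 Q1.
Proof.
rewrite /bdvd /T2 => cop [gP gQ].
(* Otherwise g absorbs every factor t2 of the second coordinate of F(C),
   and comparing with the first coordinate forces t2 | c2, then t2 | c1. *)
have [/mulX_of_root0 //|Q0] := eqVneq Q1.[0] 0; exfalso.
have g0 : g.[0] = 0.
  have : (g * Q1).[0] = 0 by rewrite -gQ /T2 !hornerE.
  by rewrite hornerM => /eqP; rewrite mulf_eq0 (negbTE Q0) orbF => /eqP.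
have [b c2_eq] : exists b, c2 = 'X * b.
  apply: mulX_of_root0.
  have : (g * P1).[0] = 0 by rewrite hornerM g0 mul0r.
  rewrite -gP /T1 /T2 !hornerE => /eqP; rewrite subr0 expf_eq0 /= -mulrA mulf_eq0 polyX_eq0 /=.
  by rewrite mulf_eq0 orbb => /eqP.
have [g3 g_eq] : exists g3, g = 'X^3 * g3.
  apply: (mulXn_factor_nroot0 (h := 4%:R * c1 * b * ('X * b - c1) * (t1 * b - c1))) Q0 _.
  by rewrite -gQ c2_eq /T2; ring.
have [a c1_eq] : exists a, c1 = 'X * a.
  apply: mulX_of_root0.
  have gP' : 'X * (g3 * P1) = (t1 * 'X * b ^+ 2 - c1 ^+ 2) ^+ 2.
    apply: (@mulfI _ ('X^2)); first by rewrite expf_neq0 ?polyX_eq0.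
    by rewrite !mulrA -exprSr -g_eq -gP c2_eq /T2; ring.
  have : ((t1 * 'X * b ^+ 2 - c1 ^+ 2) ^+ 2).[0] = 0.
    by rewrite -gP' hornerM hornerX mul0r.
  by rewrite /T1 !hornerE => /eqP; rewrite expf_eq0 /= oppr_eq0 expf_eq0 /= => /eqP.
have X_unit : ('X : bp) \is a GRing.unit by apply: cop; [exists a | exists b].
by rewrite poly_unitE size_polyX in X_unit.
Qed.

Definition Fmap_red (z : bp * bp) : bp * bp :=
  ((t1 * t2 * z.2 ^+ 2 - z.1 ^+ 2) ^+ 2,
   4%:R * z.1 * z.2 * (t2 * z.2 - z.1) * (t1 * z.2 - z.1)).

Definition fmap_red (a b : C) (z : C * C) : C * C :=
  ((a * b * z.2 ^+ 2 - z.1 ^+ 2) ^+ 2,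
   4%:R * z.1 * z.2 * (b * z.2 - z.1) * (a * z.2 - z.1)).

Lemma Fmap_mulT2 (p r : bp) : Fmap p (t2 * r) =
  (t2 ^+ 2 * (Fmap_red (p, r)).1, t2 ^+ 2 * (t2 * (Fmap_red (p, r)).2)).
Proof. by rewrite /Fmap /Fmap_red /=; congr (_, _); ring. Qed.

Lemma FseqS (P Q : bp) (n : nat) : let z := Fseq P Q n in
  Fseq P Q n.+1 = (divT2sq (Fmap z.1 z.2).1, divT2sq (Fmap z.1 z.2).2).
Proof. by rewrite /=; case: (Fseq P Q n). Qed.

Lemma Fseq_mulT2 (P q : bp) (n : nat) : let z := iter n Fmap_red (P, q) in
  Fseq P (t2 * q) n = (z.1, t2 * z.2).
Proof.
elim: n => [//|n IH]; rewrite FseqS IH Fmap_mulT2 /divT2sq.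
by rewrite ![t2 ^+ 2 * _]mulrC /T2 !drop_polyMXn_id.
Qed.

Lemma beval_T2M (q : bp) (a b : C) : beval (t2 * q) a b = b * beval q a b.
Proof. by rewrite /beval /T2 hornerM hornerX hornerM hornerC. Qed.

Lemma beval_Fmap_red (w : bp * bp) (a b : C) :
  (beval (Fmap_red w).1 a b, beval (Fmap_red w).2 a b)
  = fmap_red a b (beval w.1 a b, beval w.2 a b).
Proof.
rewrite /Fmap_red /fmap_red /beval /T1 /T2 /=.
rewrite -[4%:R]polyC_natr -[4%:R]polyC_natr.
by rewrite !(hornerM, hornerD, hornerN, horner_exp, hornerX, hornerC) !expr2.
Qed.

Lemma beval_iter_Fmap_red (z : bp * bp) (a b : C) (n : nat) :
  let w := iter n Fmap_red z in
  (beval w.1 a b, beval w.2 a b) = iter n (fmap_red a b) (beval z.1 a b, beval z.2 a b).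
Proof. by elim: n => [//|n /= <-]; rewrite beval_Fmap_red. Qed.

End ReducedIteration.

Section ComplexModulus.
Variable R : realType.
Local Notation C := (R[i]).

Lemma cabs_ge0 (z : C) : 0 <= cabs z.
Proof. by case: z => x y; exact: sqrtr_ge0. Qed.

Lemma cabs0 : cabs (0 : C) = 0.
Proof. exact: ComplexField.Normc.normc0. Qed.

Lemma cabs1 : cabs (1 : C) = 1.
Proof. exact: ComplexField.Normc.normc1. Qed.

Lemma cabs_eq0 (z : C) : (cabs z == 0) = (z == 0).
Proof.
apply/eqP/eqP => [|->]; last exact: cabs0.
exact: ComplexField.Normc.eq0_normc.
Qed.

Lemma cabs_gt0 (z : C) : (0 < cabs z) = (z != 0).
Proof. by rewrite lt_def cabs_eq0 cabs_ge0 andbT. Qed.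

Lemma cabsM (z w : C) : cabs (z * w) = cabs z * cabs w.
Proof. exact: ComplexField.Normc.normcM. Qed.

Lemma cabsV (z : C) : cabs z^-1 = (cabs z)^-1.
Proof. exact: ComplexField.Normc.normcV. Qed.

Lemma cabsX (z : C) (n : nat) : cabs (z ^+ n) = cabs z ^+ n.
Proof. by elim: n => [|n IH]; rewrite ?expr0 ?cabs1 // !exprS cabsM IH. Qed.

Lemma cabsN (z : C) : cabs (- z) = cabs z.
Proof. exact: normcN. Qed.

Lemma cabs_natr (n : nat) : cabs (n%:R : C) = n%:R.
Proof. by rewrite /cabs (normcMn 1 n) ComplexField.Normc.normc1. Qed.

Lemma cabsD (z w : C) : cabs (z + w) <= cabs z + cabs w.
Proof. exact: le_normcD. Qed.

Lemma cabsB (z w : C) : cabs (z - w) <= cabs z + cabs w.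
Proof. by rewrite -(cabsN w); exact: cabsD. Qed.

Lemma max_cabs_div (u z w : C) : u != 0 ->
  Num.max (cabs z) (cabs w) = cabs u * Num.max (cabs (z / u)) (cabs (w / u)).
Proof.
move=> u_neq0; have u_gt0 : 0 < cabs u by rewrite cabs_gt0.
rewrite maxr_pMr ?cabs_ge0 // !cabsM cabsV.
by rewrite [cabs u * (cabs z * _)]mulrCA [cabs u * (cabs w * _)]mulrCA divff ?gt_eqF // !mulr1.
Qed.

Lemma max1_cabs_quadratic (w w' : C) : cabs w' <= 4%:R * cabs w * (cabs w + 1) ->
  Num.max 1 (cabs w') <= 8%:R * Num.max 1 (cabs w) ^+ 2.
Proof.
move=> w'_le; set M := Num.max 1 (cabs w).
have M_ge1 : 1 <= M by rewrite le_max lexx.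
have w_le : cabs w <= M by rewrite le_max lexx orbT.
have w_ge0 := cabs_ge0 w.
by rewrite ge_max; apply/andP; split; rewrite expr2; nra.
Qed.

End ComplexModulus.

Section Asymptotics.
Variable R : realType.

Lemma quadratic_recurrence_bound (M : nat -> R) :
  (forall n, 1 <= M n) -> (forall n, M n.+1 <= 8%:R * M n ^+ 2) ->
  forall n, 8%:R * M n <= (8%:R * M 0) ^+ (2 ^ n).
Proof.
move=> M_ge1 M_rec; elim=> [|n IH]; first by rewrite expn0 expr1.
rewrite expnS mulnC exprM.
have M8_ge0 : 0 <= 8%:R * M n by have := M_ge1 n; lra.
apply: (@le_trans _ _ ((8%:R * M n) ^+ 2)); rewrite !expr2.
  by have := M_rec n; rewrite expr2; nra.
exact: ler_pM.
Qed.

Lemma ln_quadratic_recurrence (M : nat -> R) :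
  (forall n, 1 <= M n) -> (forall n, M n.+1 <= 8%:R * M n ^+ 2) ->
  forall n, ln (M n) <= 2%:R ^+ n * ln (8%:R * M 0).
Proof.
move=> M_ge1 M_rec n.
have M_gt0 k : 0 < M k by have := M_ge1 k; lra.
have M0_gt0 : 0 < 8%:R * M 0 by have := M_gt0 0; lra.
rewrite -natrX mulr_natl -lnXn //.
apply: (@le_trans _ _ (ln (8%:R * M n))).
  by rewrite ler_ln ?posrE //; have := M_gt0 n; lra.
rewrite ler_ln ?posrE ?exprn_gt0 //; last by have := M_gt0 n; lra.
exact: quadratic_recurrence_bound.
Qed.

Lemma cvg_div_pow4 (e : nat -> R) (K : R) (d : nat) :
  (forall n, `|e n| <= K * 2%:R ^+ n) ->
  (fun n => e n / ((4 ^ n * d)%N)%:R) @ \oo --> 0.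
Proof.
move=> e_bound; case: d => [|d].
  by apply: cvg_near_cst; apply: nearW => n; rewrite muln0 invr0 mulr0.
set D : R := d.+1%:R; have D_gt0 : 0 < D by rewrite ltr0n.
have K_ge0 : 0 <= K by have := e_bound 0; rewrite expr0 mulr1; apply: le_trans.
have geo : geometric (K / D) (2^-1 : R) @ \oo --> 0.
  by apply: cvg_geometric; rewrite gtr0_norm ?invf_lt1 //; lra.
apply: (squeeze_cvgr (f := fun n => - geometric (K / D) (2^-1 : R) n)
                      (h := geometric (K / D) (2^-1 : R))).
- apply: nearW => n /=; rewrite -ler_norml.
  have den : ((4 ^ n * d.+1)%N)%:R = (2%:R ^+ n) ^+ 2 * D :> R.
    by rewrite natrM natrX -exprM mulnC exprM expr2 -natrM.
  have den_gt0 : 0 < (2%:R ^+ n) ^+ 2 * D :> R by rewrite mulr_gt0 ?exprn_gt0.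
  rewrite normrM normfV den (gtr0_norm den_gt0) ler_pdivrMr //.
  have -> : K / D * 2^-1 ^+ n * ((2%:R ^+ n) ^+ 2 * D) = K * 2%:R ^+ n.
    rewrite exprVn; field; apply/andP; split; apply: lt0r_neq0; first exact: exprn_gt0.
    by have := ler0n R d; lra.
  exact: e_bound.
- by rewrite -oppr0; apply: (cvgN geo).
- exact: geo.
Qed.

Lemma cvg_ln_eventually0 (A : nat -> R) (d : nat) :
  (forall n, A n.+1 = 0) ->
  (fun n => ln (A n) / ((4 ^ n * d)%N)%:R) @ \oo --> 0.
Proof.
move=> A_eq0; apply: (cvg_div_pow4 (K := `|ln (A 0)|)) => -[|n].
  by rewrite expr0 mulr1.
by rewrite A_eq0 ln0 // normr0 mulr_ge0 ?exprn_ge0.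
Qed.

Lemma cvg_ln_pow4 (A : nat -> R) (a : R) (m M : nat -> R) (d : nat) :
  0 < a -> (forall n, A n = a ^+ (4 ^ n) * m n) ->
  (forall n, 1 <= M n) -> (forall n, M n.+1 <= 8%:R * M n ^+ 2) ->
  (forall n, 2^-1 <= m n <= 2%:R * M n) ->
  (fun n => ln (A n) / ((4 ^ n * d)%N)%:R) @ \oo --> ln a / d%:R.
Proof.
move=> a_gt0 A_eq M_ge1 M_rec m_bounds.
have m_gt0 n : 0 < m n by have /andP[] := m_bounds n; lra.
set K := ln 2%:R + ln (8%:R * M 0).
have ln_m n : `|ln (m n)| <= K * 2%:R ^+ n.
  have ln2_ge0 : 0 <= ln (2%:R : R) by rewrite ln_ge0 // ler1n.
  have ln8M_ge0 : 0 <= ln (8%:R * M 0) by rewrite ln_ge0 //; have := M_ge1 0; lra.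
  have pow2_ge1 : 1 <= (2%:R : R) ^+ n by rewrite exprn_ege1 // ler1n.
  have ln_M := ln_quadratic_recurrence M_ge1 M_rec n.
  have [m_ge m_le] := andP (m_bounds n).
  have M_gt0 : 0 < M n by have := M_ge1 n; lra.
  have ln_m_le : ln (m n) <= ln 2%:R + ln (M n).
    by rewrite -lnM ?posrE // ler_ln ?posrE // mulr_gt0.
  have ln_m_ge : - ln 2%:R <= ln (m n).
    by rewrite -lnV ?posrE // ler_ln ?posrE ?invr_gt0.
  rewrite ler_norml /K; apply/andP; split; nra.
have ln_split n : ln (A n) / ((4 ^ n * d)%N)%:R
    = ln a / d%:R + ln (m n) / ((4 ^ n * d)%N)%:R.
  rewrite A_eq lnM ?posrE ?exprn_gt0 // lnXn // mulrDl; congr (_ + _).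
  by rewrite natrM invfM -[ln a *+ _]mulr_natl mulrACA mulfV ?pnatr_eq0 ?expn_eq0 // mul1r.
have lim : (fun n => ln a / d%:R + ln (m n) / ((4 ^ n * d)%N)%:R) @ \oo
    --> ln a / d%:R + 0 := cvgD (cvg_cst _) (cvg_div_pow4 d ln_m).
rewrite addr0 in lim; rewrite (eq_cvg _ _ ln_split); exact: lim.
Qed.

End Asymptotics.

Section Orbits.
Variable R : realType.
Local Notation C := (R[i]).

Definition Gorbit (a b : C) (z : C * C) (d n : nat) : R :=
  let w := iter n (fmap_red a b) z in
  ln (Num.max (cabs w.1) (cabs (b * w.2))) / ((4 ^ n * d)%N)%:R.

Lemma Gseq_mulT2 (P q : bpoly R) (d : nat) (a b : C) (n : nat) :
  Gseq P (T2 R * q) d a b n = Gorbit a b (beval P a b, beval q a b) d n.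
Proof.
by rewrite /Gseq /Gorbit Fseq_mulT2 /= beval_T2M -(beval_iter_Fmap_red (P, q)).
Qed.

Lemma cvg_Gorbit10 (z : C * C) (d : nat) :
  Gorbit 1 0 z d @ \oo --> ln (cabs z.1) / d%:R.
Proof.
pose x n := (iter n (fmap_red 1 0) z).1; pose y n := (iter n (fmap_red 1 0) z).2.
have x_pow n : x n = z.1 ^+ (4 ^ n).
  elim: n => [|n IH]; rewrite ?expr1 //.
  by rewrite /x iterS /= -/(x n) IH mulr0 mul0r sub0r sqrrN -!exprM expnSr -mulnA.
have A_eq n : Num.max (cabs (x n)) (cabs (0 * y n)) = cabs z.1 ^+ (4 ^ n) * 1.
  by rewrite mul0r cabs0 x_pow cabsX mulr1; apply/max_idPl; rewrite exprn_ge0 ?cabs_ge0.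
have [z1_eq0|z1_neq0] := eqVneq z.1 0.
  rewrite z1_eq0 cabs0 ln0 // mul0r; apply: cvg_ln_eventually0 => n.
  by rewrite -/(x n.+1) -/(y n.+1) A_eq z1_eq0 cabs0 expr0n expn_eq0 mul0r.
apply: (cvg_ln_pow4 (m := fun=> 1) (M := fun=> 1)) A_eq _ _ _ => //.
- by rewrite cabs_gt0.
- by move=> n; rewrite expr1n mulr1 ler1n.
- by move=> n; apply/andP; split; lra.
Qed.

Lemma cvg_Gorbit01 (z : C * C) (d : nat) :
  Gorbit 0 1 z d @ \oo --> ln (cabs z.1) / d%:R.
Proof.
pose x n := (iter n (fmap_red 0 1) z).1; pose y n := (iter n (fmap_red 0 1) z).2.
have xS n : x n.+1 = x n ^+ 4.
  by rewrite /x iterS /= !mul0r sub0r sqrrN -!exprM.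
have yS n : y n.+1 = - (4%:R * x n * y n * (y n - x n) * x n).
  by rewrite /y iterS /= -/(x n) -/(y n) mul1r mul0r sub0r mulrN.
have x_pow n : x n = z.1 ^+ (4 ^ n).
  by elim: n => [|n IH]; rewrite ?expr1 // xS IH -exprM expnSr.
have [z1_eq0|z1_neq0] := eqVneq z.1 0.
  have x_eq0 n : x n = 0 by rewrite x_pow z1_eq0 expr0n expn_eq0.
  rewrite z1_eq0 cabs0 ln0 // mul0r; apply: cvg_ln_eventually0 => n.
  by rewrite -/(x n.+1) -/(y n.+1) yS !x_eq0 !(mulr0, mul0r) oppr0 mulr0 cabs0 maxxx.
have x_neq0 n : x n != 0 by rewrite x_pow expf_neq0.
pose w n := y n / x n.
have wS n : w n.+1 = - (4%:R * w n * (w n - 1)).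
  by rewrite /w xS yS; field; rewrite x_neq0.
pose M n := Num.max 1 (cabs (w n)).
have M_ge1 n : 1 <= M n by rewrite le_max lexx.
apply: (cvg_ln_pow4 (m := M) (M := M)) => //.
- by rewrite cabs_gt0.
- move=> n; rewrite -/(x n) -/(y n) mul1r (max_cabs_div _ _ (x_neq0 n)).
  by rewrite divff ?x_neq0 // cabs1 {1}x_pow cabsX.
- move=> n; apply: max1_cabs_quadratic.
  rewrite wS cabsN (cabsM _ (w n - 1)) (cabsM _ (w n)) cabs_natr.
  have := cabsB (w n) 1; rewrite cabs1; have := cabs_ge0 (w n); nra.
- by move=> n; apply/andP; split; have := M_ge1 n; lra.
Qed.

Lemma cvg_Gorbit11 (z : C * C) (d : nat) :
  Gorbit 1 1 z d @ \oo --> ln (cabs (z.1 - z.2)) / d%:R.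
Proof.
pose x n := (iter n (fmap_red 1 1) z).1; pose y n := (iter n (fmap_red 1 1) z).2.
have xS n : x n.+1 = (y n ^+ 2 - x n ^+ 2) ^+ 2 by rewrite /x iterS /= !mul1r.
have yS n : y n.+1 = 4%:R * x n * y n * (y n - x n) * (y n - x n).
  by rewrite /y iterS /= !mul1r.
pose u n := x n - y n.
have u_pow n : u n = u 0 ^+ (4 ^ n).
  elim: n => [|n IH]; rewrite ?expr1 //.
  have -> : u n.+1 = u n ^+ 4 by rewrite /u xS yS; ring.
  by rewrite IH -exprM expnSr.
rewrite -[z.1 - z.2]/(u 0).
have [u0_eq0|u0_neq0] := eqVneq (u 0) 0.
  have x_eq_y n : x n = y n.
    by apply/eqP; rewrite -subr_eq0 -/(u n) u_pow u0_eq0 expr0n expn_eq0.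
  rewrite u0_eq0 cabs0 ln0 // mul0r; apply: cvg_ln_eventually0 => n.
  by rewrite -/(x n.+1) -/(y n.+1) xS yS x_eq_y !subrr expr2 !mulr0 cabs0 maxxx.
have u_neq0 n : u n != 0 by rewrite u_pow expf_neq0.
pose w n := y n / u n.
have x_div_u n : x n / u n = 1 + w n.
  by rewrite /w /u; field; exact: u_neq0.
have wS n : w n.+1 = 4%:R * (1 + w n) * w n.
  rewrite -x_div_u /w.
  have -> : u n.+1 = u n ^+ 4 by rewrite /u xS yS; ring.
  by rewrite yS /u; field; exact: u_neq0.
pose M n := Num.max 1 (cabs (w n)).
apply: (cvg_ln_pow4 (m := fun n => Num.max (cabs (1 + w n)) (cabs (w n))) (M := M)).
- by rewrite cabs_gt0.
- move=> n; rewrite -/(x n) -/(y n) mul1r (max_cabs_div _ _ (u_neq0 n)).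
  by rewrite x_div_u {1}u_pow cabsX.
- by move=> n; rewrite le_max lexx.
- move=> n; apply: max1_cabs_quadratic.
  rewrite wS (cabsM _ (w n)) (cabsM _ (1 + w n)) cabs_natr.
  have := cabsD 1 (w n); rewrite cabs1; have := cabs_ge0 (w n); nra.
- move=> n; have w_le_M : cabs (w n) <= M n by rewrite le_max lexx orbT.
  have M_ge1 : 1 <= M n by rewrite le_max lexx.
  have one_le : 1 <= cabs (1 + w n) + cabs (w n).
    by have := cabsB (1 + w n) (w n); rewrite addrK cabs1.
  have := cabsD 1 (w n); rewrite cabs1 => one_w_le.
  have [m1 m2] : cabs (1 + w n) <= Num.max (cabs (1 + w n)) (cabs (w n))
               /\ cabs (w n) <= Num.max (cabs (1 + w n)) (cabs (w n)).
    by rewrite !le_max !lexx orbT.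
  rewrite ge_max; apply/and3P; split; lra.
Qed.

End Orbits.

Unset Implicit Arguments. Set Strict Implicit.

Theorem proposition4p1 (R : realType) (e : nat) (c1 c2 : bpoly R)
  (g P1 Q1 : bpoly R) (d : nat) :
  (* C = (c1, c2): coprime homogeneous polynomials of equal degree e,
     lifting c = c1(t,1)/c2(t,1) in C(t) *)
  homog e c1 -> homog e c2 -> c2 != 0 -> bcoprime c1 c2 ->
  (* c \notin {0, 1, t} *)
  c1 != 0 -> c1 != c2 -> c1 * T2 R != c2 * T1 R ->
  (* F_1 = (P1, Q1) = F_{t1,t2}(C) / gcd, of degree d *)
  Fmap c1 c2 = (g * P1, g * Q1) -> bcoprime P1 Q1 ->
  homog d P1 -> homog d Q1 ->
  (* G_C(1,0), G_C(0,1), G_C(1,1) *)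
  Gseq P1 Q1 d 1 0 @ \oo --> ln (cabs (beval P1 1 0)) / d%:R /\
  Gseq P1 Q1 d 0 1 @ \oo --> ln (cabs (beval P1 0 1)) / d%:R /\
  Gseq P1 Q1 d 1 1 @ \oo --> ln (cabs (beval P1 1 1 - beval Q1 1 1)) / d%:R.
Proof.
move=> _ _ _ c_coprime _ _ _ F_eq _ _ _.
have [q ->] := bdvd_T2_reduced_Fmap c_coprime F_eq.
rewrite !(eq_cvg _ _ (Gseq_mulT2 P1 q d _ _)) beval_T2M mul1r.
split; first exact: cvg_Gorbit10.
split; first exact: cvg_Gorbit01.
exact: cvg_Gorbit11.
Qed.
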